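(* Let $1<t'<t$ be real, let $X$ be feasible for $Q(t)$ and let $x=\operatorname{diag}(X)$. Set $\alpha=\frac{t'(t'-1)}{t(t-1)}$ and $\beta=\frac{t'(t-t')}{t(t-1)}$. Then $X':=\alpha X+\beta\operatorname{Diag}(x)$ is feasible for $Q(t')$.
   Context: Let $G$ be a simple graph with vertex set $V=\{1,\dots,n\}$, edge set $E$ and adjacency matrix $A$. Let $e$ be the all-ones vector, $\langle M,N\rangle=\operatorname{trace}(M^TN)$, $X\geq 0$ mean entrywise nonnegativity, and $\operatorname{Diag}(x)$ the diagonal matrix with diagonal $x$. For real $t\geq 1$, $Q(t)$ is the semidefinite program $$\min \tfrac12\langle A,X\rangle\ \text{ s.t. } X\succeq 0,\ X\geq 0,\ \operatorname{trace}(X)=t,\ Xe=t\operatorname{diag}(X)$$ over symmetric $n\times n$ matrices $X$; ''feasible for $Q(t)$'' means satisfying these constraints. *)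

From mathcomp Require Import all_boot all_order all_algebra.
Set Implicit Arguments. Unset Strict Implicit. Unset Printing Implicit Defensive.
Import Order.TTheory GRing.Theory Num.Theory.
Local Open Scope ring_scope.

Definition mdiag (R : ringType) (n : nat) (X : 'M[R]_n) : 'cV[R]_n :=
  \col_i X i i.

Definition Diag (R : ringType) (n : nat) (x : 'cV[R]_n) : 'M[R]_n :=
  diag_mx x^T.

Definition psd (R : realFieldType) (n : nat) (X : 'M[R]_n) : Prop :=
  X^T = X /\ forall v : 'cV[R]_n, 0 <= (v^T *m X *m v) 0 0.

Definition feasibleQ (R : realFieldType) (n : nat) (t : R) (X : 'M[R]_n) : Prop :=
  [/\ psd X,
      (forall i j, 0 <= X i j),
      \tr X = t
    & X *m const_mx 1 = t *: mdiag X].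

From mathcomp Require Import all_boot all_order all_algebra.
From mathcomp Require Import ring lra.
Import Order.TTheory GRing.Theory Num.Theory.
Local Open Scope ring_scope.

(* Each of the four constraints of Q(t) is preserved by the map
   X |-> a X + b Diag(diag X) with a, b >= 0: positive semidefiniteness and
   entrywise nonnegativity form convex cones containing Diag(diag X), the
   trace gets multiplied by a + b, and since Diag(diag X) e = diag X the row
   sums become (a t + b) diag X while the diagonal becomes (a + b) diag X.
   The coefficients alpha, beta are exactly the solution of
   (alpha + beta) t = t' and alpha t + beta = t' (alpha + beta). *)

Section DiagonalPart.
Variables (R : comNzRingType) (n : nat).

Lemma DiagE (x : 'cV[R]_n) i j : Diag x i j = x i 0 *+ (i == j).
Proof. by rewrite !mxE. Qed.

Lemma mdiagD (X Y : 'M[R]_n) : mdiag (X + Y) = mdiag X + mdiag Y.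
Proof. by apply/matrixP => i k; rewrite !mxE. Qed.

Lemma mdiagZ (a : R) (X : 'M[R]_n) : mdiag (a *: X) = a *: mdiag X.
Proof. by apply/matrixP => i k; rewrite !mxE. Qed.

Lemma mdiag_Diag (x : 'cV[R]_n) : mdiag (Diag x) = x.
Proof. by apply/matrixP => i k; rewrite ord1 mxE DiagE eqxx mulr1n. Qed.

Lemma mxtrace_Diag_mdiag (X : 'M[R]_n) : \tr (Diag (mdiag X)) = \tr X.
Proof. by rewrite mxtrace_diag; apply: eq_bigr => i _; rewrite !mxE. Qed.

Lemma Diag_mul_const1 (x : 'cV[R]_n) : Diag x *m const_mx 1 = x.
Proof. by apply/matrixP => i k; rewrite ord1 mul_diag_mx !mxE mulr1. Qed.

End DiagonalPart.

Section Psd.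
Variables (R : realFieldType) (n : nat).

Lemma psdD (X Y : 'M[R]_n) : psd X -> psd Y -> psd (X + Y).
Proof.
move=> [XT Xv] [YT Yv]; split; first by rewrite linearD /= XT YT.
by move=> v; rewrite mulmxDr mulmxDl mxE addr_ge0.
Qed.

Lemma psdZ (a : R) (X : 'M[R]_n) : 0 <= a -> psd X -> psd (a *: X).
Proof.
move=> a0 [XT Xv]; split; first by rewrite linearZ /= XT.
by move=> v; rewrite -scalemxAr -scalemxAl mxE mulr_ge0.
Qed.

Lemma Diag_quadformE (x v : 'cV[R]_n) :
  (v^T *m Diag x *m v) 0 0 = \sum_i x i 0 * v i 0 ^+ 2.
Proof.
rewrite mul_mx_diag mxE; apply: eq_bigr => i _.
by rewrite !mxE mulrAC mulrC mulrA.
Qed.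

Lemma psd_Diag (x : 'cV[R]_n) : (forall i, 0 <= x i 0) -> psd (Diag x).
Proof.
move=> x0; split; first exact: tr_diag_mx.
move=> v; rewrite Diag_quadformE; apply: sumr_ge0 => i _.
by rewrite mulr_ge0 ?sqr_ge0.
Qed.

End Psd.

Lemma feasibleQ_diag_combination (R : realFieldType) (n : nat)
    (t t' a b : R) (X : 'M[R]_n) :
  0 <= a -> 0 <= b -> (a + b) * t = t' -> a * t + b = t' * (a + b) ->
  feasibleQ t X -> feasibleQ t' (a *: X + b *: Diag (mdiag X)).
Proof.
move=> a0 b0 trace_eq row_eq [Xpsd X_ge0 Xtr Xe].
have diag_ge0 i : 0 <= mdiag X i 0 by rewrite mxE.
split.
- by apply: psdD; apply: psdZ => //; apply: psd_Diag.
- by move=> i j; rewrite !mxE addr_ge0 ?mulr_ge0 ?mulrn_wge0.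
- by rewrite mxtraceD !mxtraceZ mxtrace_Diag_mdiag Xtr -mulrDl.
- rewrite mulmxDl -!scalemxAl Xe Diag_mul_const1 mdiagD !mdiagZ mdiag_Diag.
  by rewrite scalerA -!scalerDl scalerA row_eq.
Qed.

Theorem mainTheorem9 (R : realFieldType) (n : nat) (t t' : R) (X : 'M[R]_n) :
  1 < t' -> t' < t -> feasibleQ t X ->
  let alpha := t' * (t' - 1) / (t * (t - 1)) in
  let beta := t' * (t - t') / (t * (t - 1)) in
  feasibleQ t' (alpha *: X + beta *: Diag (mdiag X)).
Proof.
move=> lt1t' lt't XQ alpha beta.
have t_neq0 : t != 0 by apply/eqP; lra.
have t1_neq0 : t - 1 != 0 by apply/eqP; lra.
have den_gt0 : 0 < t * (t - 1) by apply: mulr_gt0; lra.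
apply: feasibleQ_diag_combination XQ.
- by apply: divr_ge0; [apply: mulr_ge0 | apply: ltW]; lra.
- by apply: divr_ge0; [apply: mulr_ge0 | apply: ltW]; lra.
- by rewrite /alpha /beta; field; rewrite t_neq0 t1_neq0.
- by rewrite /alpha /beta; field; rewrite t_neq0 t1_neq0.
Qed.
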